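(* Let $p_1,\dots,p_n\ge0$ with $\sum_ip_i=1$, integers $1\le d_1<d_2<\dots<d_n$ with $\sum_ip_id_i>1$, and let $j=\min\{i:p_i>0\}$. For $\lambda\in(0,1)$ let $\bar F_\lambda$ solve $\bar F'(w)=\lambda\sum_ip_i\bar F(w)^{d_i}-\bar F(w)$, $\bar F(0)=\lambda$, let $\mathbb E[W_\lambda]=\sum_ip_i\int_0^\infty\bar F_\lambda(w)^{d_i}dw$ and $p_\lambda=1-\sum_ip_i\lambda^{d_i}$. Then $$\lim_{\lambda\to0^+}-\frac{\mathbb E[W_\lambda]}{\log(p_\lambda)}=\frac1{d_j}\qquad\text{and}\qquad\lim_{\lambda\to1^-}-\frac{\mathbb E[W_\lambda]}{\log(p_\lambda)}=\frac1{\sum_ip_id_i-1}.$$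
   Context: This is the LL($d_1,\dots,d_n,p_1,\dots,p_n$) policy with exponential(1) job sizes; $p_\lambda$ is the probability that a job is assigned to an idle server. *)

From Stdlib Require Import Reals.
From Coquelicot Require Import Coquelicot.
Open Scope R_scope.

(* sumI n f = f 0 + f 1 + ... + f (n-1)  (indices 0..n-1 stand for 1..n of the paper) *)
Fixpoint sumI (n : nat) (f : nat -> R) : R :=
  match n with
  | O => 0
  | S k => sumI k f + f k
  end.

Definition EW (n : nat) (p : nat -> R) (d : nat -> nat) (Fbar : R -> R) : R :=
  sumI n (fun i => p i * RInt_gen (fun w => Fbar w ^ d i)
                                  (at_point 0) (Rbar_locally p_infty)).

Definition plam (n : nat) (p : nat -> R) (d : nat -> nat) (lam : R) : R :=
  1 - sumI n (fun i => p i * lam ^ d i).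

(* Write [pgf x = sum_i p_i x^(d_i)] and [rpgf x = pgf x / x].  The proof
   rests on the change of variables [x = F w] along the solution of
   [F' = lam * pgf F - F], [F 0 = lam]: first, [F] stays in (0,1) and decays
   exponentially (by continuous induction), so that
     [int_0^oo F(w)^(k+1) dw = int_0^lam x^k / (1 - lam rpgf x) dx],
   whence [E[W] = int_0^lam rpgf x / (1 - lam rpgf x) dx].
   - As [lam -> 0]: this integral lies between [int_0^lam rpgf] and that
     integral divided by [1 - lam], while [-ln p_lam] lies between [pgf lam]
     and [pgf lam / p_lam]; factoring [lam^(d_j)] out of both polynomials
     leaves continuous bounds that tend to [1 / d_j].
   - As [lam -> 1]: with [m = sum_i p_i d_i - 1 = rpgf'(1)], comparing
     [1 - rpgf x] with [m (1 - x)] from above and with [c (1 - x)] (any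
     [c < m], near [x = 1]) from below shows [E[W] / (-ln (1 - lam)) -> 1/m],
     while [-ln p_lam = -ln (1 - lam) + O(1)]. *)

From Stdlib Require Import Reals Lra Lia Classical.
From Coquelicot Require Import Coquelicot.
Open Scope R_scope.

Lemma sumI_ext n f g : (forall i, (i < n)%nat -> f i = g i) -> sumI n f = sumI n g.
Proof.
  induction n as [|n IH]; simpl; intros H; [reflexivity|].
  rewrite IH, H; auto; intros; apply H; lia.
Qed.

Lemma sumI_le n f g : (forall i, (i < n)%nat -> f i <= g i) -> sumI n f <= sumI n g.
Proof.
  induction n as [|n IH]; simpl; intros H; [lra|].
  apply Rplus_le_compat; [apply IH; intros; apply H; lia | apply H; lia].
Qed.

Lemma sumI_zero n : sumI n (fun _ => 0) = 0.
Proof. induction n as [|n IH]; simpl; [|rewrite IH]; ring. Qed.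

Lemma sumI_nonneg n f : (forall i, (i < n)%nat -> 0 <= f i) -> 0 <= sumI n f.
Proof. intros H. rewrite <- (sumI_zero n). now apply sumI_le. Qed.

Lemma sumI_scal n a f : sumI n (fun i => a * f i) = a * sumI n f.
Proof. induction n as [|n IH]; simpl; [|rewrite IH]; ring. Qed.

Lemma sumI_minus n f g : sumI n (fun i => f i - g i) = sumI n f - sumI n g.
Proof. induction n as [|n IH]; simpl; [|rewrite IH]; ring. Qed.

Lemma sumI_single n f j :
  (j < n)%nat -> (forall i, (i < n)%nat -> i <> j -> f i = 0) -> sumI n f = f j.
Proof.
  induction n as [|n IH]; simpl; intros Hj H; [lia|].
  destruct (Nat.eq_dec j n) as [->|Hne].
  - rewrite (sumI_ext n f (fun _ => 0)), sumI_zero; [ring|].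
    intros; apply H; lia.
  - rewrite IH, (H n); [ring|lia|lia|lia|intros; apply H; lia].
Qed.

Lemma sumI_ge_term n f j :
  (forall i, (i < n)%nat -> 0 <= f i) -> (j < n)%nat -> f j <= sumI n f.
Proof.
  induction n as [|n IH]; simpl; intros H Hj; [lia|].
  assert (0 <= sumI n f) by (apply sumI_nonneg; intros; apply H; lia).
  assert (0 <= f n) by (apply H; lia).
  destruct (Nat.eq_dec j n) as [->|Hne]; [lra|].
  assert (f j <= sumI n f) by (apply IH; [intros; apply H|]; lia). lra.
Qed.

Lemma sumI_continuity n (f : nat -> R -> R) x :
  (forall i, (i < n)%nat -> continuity_pt (f i) x) ->
  continuity_pt (fun y => sumI n (fun i => f i y)) x.
Proof.
  induction n as [|n IH]; simpl; intros H.
  - apply continuity_pt_const; intros a b; reflexivity.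
  - apply (continuity_pt_plus (fun y => sumI n (fun i => f i y)) (f n));
      [apply IH; intros; apply H; lia | apply H; lia].
Qed.

Lemma polynomial_continuity n (c : nat -> R) (k : nat -> nat) x :
  continuity_pt (fun y => sumI n (fun i => c i * y ^ k i)) x.
Proof.
  apply (sumI_continuity n (fun i y => c i * y ^ k i)). intros i _.
  apply (continuity_pt_mult (fun _ => c i) (fun y => y ^ k i)).
  - apply continuity_pt_const; intros a b; reflexivity.
  - apply derivable_continuous_pt, derivable_pt_pow.
Qed.

Lemma is_RInt_sumI n (p : nat -> R) (f : nat -> R -> R) (v : nat -> R) a b :
  (forall i, (i < n)%nat -> is_RInt (f i) a b (v i)) ->
  is_RInt (fun x => sumI n (fun i => p i * f i x)) a b (sumI n (fun i => p i * v i)).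
Proof.
  induction n as [|n IH]; intros H; simpl.
  - pose proof (is_RInt_const (V:=R_NormedModule) a b 0) as Hc.
    unfold scal in Hc; simpl in Hc; unfold mult in Hc; simpl in Hc.
    rewrite Rmult_0_r in Hc. exact Hc.
  - apply (is_RInt_plus (V:=R_NormedModule)).
    + apply IH. intros; apply H; lia.
    + apply (is_RInt_scal (V:=R_NormedModule)). apply H; lia.
Qed.

Lemma pow_unit_interval x k : 0 <= x <= 1 -> 0 <= x ^ k <= 1.
Proof. intros H. induction k as [|k IH]; simpl; [lra|]. split; nra. Qed.

Lemma pow_abs_le1 x k : -1 <= x <= 1 -> -1 <= x ^ k <= 1.
Proof. intros H. induction k as [|k IH]; simpl; [lra|]. split; nra. Qed.

Lemma unit_interval_of_prod_pos y : y * (1 - y) > 0 -> 0 < y < 1.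
Proof. intros H. destruct (Rlt_dec 0 y); nra. Qed.

Lemma one_minus_pow_le x k : 0 <= x <= 1 -> 1 - x ^ k <= INR k * (1 - x).
Proof.
  intros H. induction k as [|k IH]; [simpl; lra|].
  cbn [pow]. rewrite S_INR. destruct (pow_unit_interval x k H). nra.
Qed.

Lemma one_minus_pow_ge x k : 0 <= x <= 1 -> (1 - x) * INR k * x ^ k <= 1 - x ^ k.
Proof.
  intros H. induction k as [|k IH]; [simpl; lra|].
  cbn [pow]. rewrite S_INR. destruct (pow_unit_interval x k H).
  pose proof (pos_INR k).
  assert (0 <= (1 - x) * (INR k + 1) * x ^ k)
    by (apply Rmult_le_pos; [apply Rmult_le_pos|]; lra).
  nra.
Qed.

Lemma ln_le_minus_one x : 0 < x -> ln x <= x - 1.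
Proof.
  intros Hx. pose proof (exp_ineq1_le (ln x)) as H. rewrite exp_ln in H by exact Hx. lra.
Qed.

Lemma neg_ln_one_minus_bounds y : 0 <= y < 1 -> y <= - ln (1 - y) <= y / (1 - y).
Proof.
  intros Hy. split.
  - pose proof (ln_le_minus_one (1 - y)). lra.
  - assert (Hinv : 0 < / (1 - y)) by (apply Rinv_0_lt_compat; lra).
    pose proof (ln_le_minus_one _ Hinv) as H. rewrite ln_Rinv in H by lra.
    replace (y / (1 - y)) with (/ (1 - y) - 1) by (field; lra). lra.
Qed.

(* [x |ln x| <= 1] on (0,1); used to absorb the factor [1 / lam] in the
   heavy-traffic upper bound. *)
Lemma neg_xlnx_le_one x : 0 < x < 1 -> - (x * ln x) <= 1.
Proof.
  intros Hx. assert (Hinv : 0 < / x) by (apply Rinv_0_lt_compat; lra).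
  pose proof (ln_le_minus_one _ Hinv) as H. rewrite ln_Rinv in H by lra.
  assert (x * - ln x <= x * (/ x - 1)) by (apply Rmult_le_compat_l; lra).
  replace (x * (/ x - 1)) with (1 - x) in * by (field; lra). lra.
Qed.

Lemma continuity_pt_pos_nbhd f x :
  continuity_pt f x -> f x > 0 ->
  exists del, del > 0 /\ forall y, Rabs (y - x) < del -> f y > 0.
Proof.
  intros Hc Hpos.
  destruct (proj1 (continuity_pt_locally f x) Hc (mkposreal _ Hpos)) as [e He].
  exists e. split; [apply cond_pos|]. intros y Hy.
  specialize (He y Hy). simpl in He. apply Rabs_lt_between in He. lra.
Qed.

Lemma continuous_induction (phi : R -> R) :
  (forall w, 0 <= w -> continuity_pt phi w) -> phi 0 > 0 ->
  (forall t, 0 <= t -> (forall s, 0 <= s < t -> phi s > 0) -> phi t > 0) ->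
  forall w, 0 <= w -> phi w > 0.
Proof.
  intros Hc H0 Hstep w Hw.
  set (E := fun s => 0 <= s <= w /\ forall r, 0 <= r <= s -> phi r > 0).
  assert (HE0 : E 0) by (split; [lra|]; intros r Hr; replace r with 0 by lra; exact H0).
  assert (Hb : bound E) by (exists w; intros s [Hs _]; lra).
  destruct (completeness E Hb (ex_intro _ 0 HE0)) as [t [Hub Hlub]].
  assert (Ht0 : 0 <= t) by (apply Hub; exact HE0).
  assert (Htw : t <= w) by (apply Hlub; intros s [Hs _]; lra).
  assert (Hbelow : forall s, 0 <= s < t -> phi s > 0).
  { intros s Hs. assert (Hn : ~ is_upper_bound E s) by (intros Hu; specialize (Hlub s Hu); lra).
    apply not_all_ex_not in Hn. destruct Hn as [e He].
    apply imply_to_and in He. destruct He as [[_ He] Hes]. apply He. lra. }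
  assert (Hpt : phi t > 0) by (apply Hstep; assumption).
  destruct (Req_dec t w) as [<-|Hne]; [exact Hpt|].
  (* otherwise positivity extends a little beyond [t], contradicting [t = sup E] *)
  exfalso. destruct (continuity_pt_pos_nbhd phi t (Hc t Ht0) Hpt) as [del [Hdel Hd]].
  set (s' := Rmin w (t + del / 2)).
  assert (Hs' : E s').
  { split; [unfold s'; split; [apply Rmin_glb; lra | apply Rmin_l]|].
    intros r Hr. destruct (Rlt_dec r t) as [Hrt|Hrt]; [apply Hbelow; lra|].
    apply Hd. assert (r <= t + del / 2) by (apply Rle_trans with s'; [lra|apply Rmin_r]).
    apply Rabs_lt_between; lra. }
  specialize (Hub s' Hs'). unfold s', Rmin in Hub.
  destruct (Rle_dec w (t + del / 2)); lra.
Qed.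

Lemma is_derive_continuity_pt u x l : is_derive u x l -> continuity_pt u x.
Proof.
  intros H. apply continuity_pt_filterlim, (ex_derive_continuous u x). exists l; exact H.
Qed.

Lemma nondecreasing_from_derive u du t :
  0 <= t -> (forall x, 0 <= x <= t -> is_derive u x (du x)) ->
  (forall x, 0 <= x < t -> 0 <= du x) -> u 0 <= u t.
Proof.
  intros Ht Hd Hs.
  destruct (MVT_gen u 0 t (fun x => if Rlt_dec x t then du x else 0)) as [c [Hc Heq]].
  - intros x Hx. rewrite Rmin_left, Rmax_right in Hx by lra.
    destruct (Rlt_dec x t); [apply Hd; lra | lra].
  - intros x Hx. rewrite Rmin_left, Rmax_right in Hx by lra.
    apply (is_derive_continuity_pt u x (du x)), Hd; lra.
  - rewrite Rmin_left, Rmax_right in Hc by lra.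
    destruct (Rlt_dec c t) as [Hct|Hct]; [|lra].
    specialize (Hs c (conj (proj1 Hc) Hct)). nra.
Qed.

Lemma nonincreasing_from_derive u du t :
  0 <= t -> (forall x, 0 <= x <= t -> is_derive u x (du x)) ->
  (forall x, 0 <= x < t -> du x <= 0) -> u t <= u 0.
Proof.
  intros Ht Hd Hs. cut (- u 0 <= - u t); [lra|].
  apply (nondecreasing_from_derive (fun x => - u x) (fun x => - du x) t Ht).
  - intros x Hx. apply (is_derive_opp u x (du x)), Hd; exact Hx.
  - intros x Hx. specialize (Hs x Hx). lra.
Qed.

Lemma is_RInt_antiderivative (A f : R -> R) b :
  0 <= b -> (forall x, 0 <= x <= b -> is_derive A x (f x)) ->
  (forall x, 0 <= x <= b -> ex_derive f x) -> is_RInt f 0 b (A b - A 0).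
Proof.
  intros Hb Hd Hc. refine (is_RInt_derive (V:=R_CompleteNormedModule) A f 0 b _ _);
    rewrite Rmin_left, Rmax_right by lra; [exact Hd|].
  intros x Hx. apply (ex_derive_continuous (K:=R_AbsRing) (V:=R_NormedModule)), Hc; exact Hx.
Qed.

Lemma filterlim_R_iff {T} (F : (T -> Prop) -> Prop) {FF : Filter F} (f : T -> R) l :
  filterlim f F (locally l) <-> forall eps : posreal, F (fun x => Rabs (f x - l) < eps).
Proof. rewrite filterlim_locally. split; intros H eps; exact (H eps). Qed.

Lemma is_RInt_gen_from_limit (f I : R -> R) l :
  (forall T, 0 <= T -> is_RInt f 0 T (I T)) ->
  filterlim I (Rbar_locally p_infty) (locally l) ->
  is_RInt_gen f (at_point 0) (Rbar_locally p_infty) l.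
Proof.
  intros HI Hl P HP. destruct (Hl P HP) as [M HM].
  apply (Filter_prod _ _ _ (fun x => x = 0) (fun T => Rmax 0 M < T)).
  - reflexivity.
  - exists (Rmax 0 M). auto.
  - intros x y -> Hy. pose proof (Rmax_l 0 M). pose proof (Rmax_r 0 M).
    exists (I y). split; [apply HI | apply HM]; lra.
Qed.

Lemma at_right_intro x (P : R -> Prop) del :
  0 < del -> (forall y, x < y < x + del -> P y) -> at_right x P.
Proof.
  intros Hd H. exists (mkposreal _ Hd). intros y Hy Hlt.
  change (Rabs (y - x) < del) in Hy. apply Rabs_lt_between in Hy. apply H. lra.
Qed.

Lemma continuity_pt_at_right f x : continuity_pt f x -> filterlim f (at_right x) (locally (f x)).
Proof.
  intros H. apply (filterlim_filter_le_1 (F := locally x)).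
  - intros P [e He]. exists e. intros y Hy _. exact (He y Hy).
  - now apply continuity_pt_filterlim.
Qed.

Lemma at_left_one_large_log (M : R) (P : R -> Prop) :
  (forall lam, 1 / 2 < lam < 1 -> M < - ln (1 - lam) -> P lam) -> at_left 1 P.
Proof.
  intros H.
  assert (Hdel : 0 < Rmin (1 / 2) (exp (- M))) by (apply Rmin_glb_lt; [lra|apply exp_pos]).
  exists (mkposreal _ Hdel). intros lam Hlam Hlt.
  change (Rabs (lam - 1) < Rmin (1 / 2) (exp (- M))) in Hlam. apply Rabs_lt_between in Hlam.
  pose proof (Rmin_l (1 / 2) (exp (- M))). pose proof (Rmin_r (1 / 2) (exp (- M))).
  apply H; [lra|].
  assert (ln (1 - lam) < ln (exp (- M))) by (apply ln_increasing; lra).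
  rewrite ln_exp in *. lra.
Qed.

Lemma lt_div_of_mul_lt a b c : 0 < c -> a * c < b -> a < b / c.
Proof.
  intros Hc H. apply Rmult_lt_reg_r with c; [exact Hc|].
  unfold Rdiv. rewrite Rmult_assoc, Rinv_l, Rmult_1_r by lra. exact H.
Qed.

Lemma div_lt_of_lt_mul a b c : 0 < c -> a < b * c -> a / c < b.
Proof.
  intros Hc H. apply Rmult_lt_reg_r with c; [exact Hc|].
  unfold Rdiv. rewrite Rmult_assoc, Rinv_l, Rmult_1_r by lra. exact H.
Qed.

Lemma div_le_div_cross a b c e : 0 < b -> 0 < e -> a * e <= c * b -> a / b <= c / e.
Proof.
  intros Hb He H. apply Rmult_le_reg_r with (b * e); [nra|].
  replace (a / b * (b * e)) with (a * e) by (field; lra).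
  replace (c / e * (b * e)) with (c * b) by (field; lra). exact H.
Qed.

Section LowestPower.

Variables (n : nat) (d : nat -> nat) (j : nat).
Hypothesis d_incr : forall i k, (i < k)%nat -> (k < n)%nat -> (d i < d k)%nat.
Hypothesis j_lt_n : (j < n)%nat.

Definition lowest_part (c : nat -> R) (x : R) : R := sumI n (fun i => c i * x ^ (d i - d j)).

Lemma sumI_factor_lowest_power (c : nat -> R) x :
  (forall i, (i < j)%nat -> c i = 0) ->
  sumI n (fun i => c i * x ^ d i) = x ^ d j * lowest_part c x.
Proof.
  intros Hc. unfold lowest_part. rewrite <- sumI_scal. apply sumI_ext. intros i Hi.
  destruct (Nat.lt_ge_cases i j) as [Hij|Hij]; [rewrite Hc by exact Hij; ring|].
  assert (Hle : (d j <= d i)%nat).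
  { destruct (Nat.eq_dec i j) as [->|Hne]; [lia|].
    assert (d j < d i)%nat by (apply d_incr; lia). lia. }
  replace (d i) with (d j + (d i - d j))%nat at 1 by lia. rewrite pow_add. ring.
Qed.

Lemma lowest_part_at_0 (c : nat -> R) :
  (forall i, (i < j)%nat -> c i = 0) -> lowest_part c 0 = c j.
Proof.
  intros Hc. unfold lowest_part.
  rewrite (sumI_single n _ j j_lt_n); [rewrite Nat.sub_diag; simpl; ring|].
  intros i Hi Hne. destruct (Nat.lt_ge_cases i j) as [Hij|Hij]; [rewrite Hc by exact Hij; ring|].
  assert (d j < d i)%nat by (apply d_incr; lia). rewrite pow_i by lia. ring.
Qed.

Lemma lowest_part_continuity (c : nat -> R) x : continuity_pt (lowest_part c) x.
Proof. apply polynomial_continuity. Qed.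

Lemma lowest_part_ge (c : nat -> R) x :
  (forall i, (i < n)%nat -> 0 <= c i) -> 0 <= x -> c j <= lowest_part c x.
Proof.
  intros Hc Hx. replace (c j) with (c j * x ^ (d j - d j)) by (rewrite Nat.sub_diag; simpl; ring).
  apply (sumI_ge_term n (fun i => c i * x ^ (d i - d j))); [|exact j_lt_n].
  intros i Hi. apply Rmult_le_pos; [apply Hc; exact Hi | now apply pow_le].
Qed.

End LowestPower.

(** Its generating function is [pgf x = sum_i p_i x^(d_i)];
    the queue dynamics are governed by [rpgf x = pgf x / x]. *)

Section ChoiceDistribution.

Variables (n : nat) (p : nat -> R) (d : nat -> nat).
Hypothesis p_nonneg : forall i, (i < n)%nat -> 0 <= p i.
Hypothesis p_sum : sumI n p = 1.
Hypothesis d_pos : forall i, (i < n)%nat -> (1 <= d i)%nat.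

Definition pgf (x : R) : R := sumI n (fun i => p i * x ^ d i).
Definition rpgf (x : R) : R := sumI n (fun i => p i * x ^ pred (d i)).
Definition rpgf_int (lam : R) : R := sumI n (fun i => p i / INR (d i) * lam ^ d i).
(* [excess = rpgf'(1) = sum_i p_i d_i - 1]: the mean number of extra samples. *)
Definition excess : R := sumI n (fun i => p i * INR (pred (d i))).
(* [excess_sq = sum_i p_i (d_i - 1)^2] controls the second-order term of [rpgf] at 1. *)
Definition excess_sq : R := sumI n (fun i => p i * INR (pred (d i)) ^ 2).

Lemma sumI_weights_const a : sumI n (fun i => p i * a) = a.
Proof.
  rewrite (sumI_ext n _ (fun i => a * p i)) by (intros; ring). rewrite sumI_scal, p_sum. ring.
Qed.

Lemma weighted_average_bounds (v : nat -> R) a b :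
  (forall i, (i < n)%nat -> a <= v i <= b) -> a <= sumI n (fun i => p i * v i) <= b.
Proof.
  intros Hv. rewrite <- (sumI_weights_const a) at 1. rewrite <- (sumI_weights_const b).
  split; apply sumI_le; intros i Hi; apply Rmult_le_compat_l;
    solve [apply p_nonneg; exact Hi | apply Hv; exact Hi].
Qed.

(* Basic properties of [rpgf]; the bound on [[-1, 1]] is needed because the
   kernels below must be continuous on a two-sided neighbourhood of 0. *)
Lemma rpgf_mul_id x : x * rpgf x = pgf x.
Proof.
  unfold rpgf, pgf. rewrite <- sumI_scal. apply sumI_ext; intros i Hi.
  specialize (d_pos i Hi). destruct (d i) as [|k]; [lia|]. simpl. ring.
Qed.

Lemma pgf_at_0 : pgf 0 = 0.
Proof. rewrite <- rpgf_mul_id. ring. Qed.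

Lemma rpgf_unit_interval x : 0 <= x <= 1 -> 0 <= rpgf x <= 1.
Proof. intros Hx. apply weighted_average_bounds. intros i _. now apply pow_unit_interval. Qed.

Lemma rpgf_abs_le1 x : -1 <= x <= 1 -> -1 <= rpgf x <= 1.
Proof. intros Hx. apply weighted_average_bounds. intros i _. now apply pow_abs_le1. Qed.

Lemma rpgf_continuity x : continuity_pt rpgf x.
Proof. apply polynomial_continuity. Qed.

Lemma rpgf_mono x y : 0 <= x <= y -> rpgf x <= rpgf y.
Proof.
  intros Hxy. apply sumI_le; intros i Hi. apply Rmult_le_compat_l; [now apply p_nonneg|].
  now apply pow_incr.
Qed.

Lemma one_minus_rpgf x : 1 - rpgf x = sumI n (fun i => p i * (1 - x ^ pred (d i))).
Proof.
  rewrite <- (sumI_weights_const 1) at 1. unfold rpgf. rewrite <- sumI_minus.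
  apply sumI_ext; intros; ring.
Qed.

Lemma one_minus_rpgf_le x : 0 <= x <= 1 -> 1 - rpgf x <= excess * (1 - x).
Proof.
  intros Hx. rewrite one_minus_rpgf. unfold excess. rewrite Rmult_comm, <- sumI_scal.
  apply sumI_le; intros i Hi. pose proof (p_nonneg i Hi).
  pose proof (one_minus_pow_le x (pred (d i)) Hx). nra.
Qed.

Lemma one_minus_rpgf_ge x : 0 <= x <= 1 ->
  (1 - x) * (excess - (1 - x) * excess_sq) <= 1 - rpgf x.
Proof.
  intros Hx. rewrite one_minus_rpgf. unfold excess, excess_sq.
  rewrite <- sumI_scal, <- sumI_minus, <- sumI_scal.
  apply sumI_le; intros i Hi. pose proof (p_nonneg i Hi).
  set (k := pred (d i)).
  pose proof (one_minus_pow_le x k Hx). pose proof (one_minus_pow_ge x k Hx).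
  pose proof (pos_INR k).
  assert (0 <= (1 - x) * INR k) by (apply Rmult_le_pos; lra).
  assert ((1 - x) * INR k * (1 - INR k * (1 - x)) <= (1 - x) * INR k * x ^ k)
    by (apply Rmult_le_compat_l; lra).
  assert ((1 - x) * (INR k - (1 - x) * INR k ^ 2) <= 1 - x ^ k) by nra.
  nra.
Qed.

Lemma excess_eq : excess = sumI n (fun i => p i * INR (d i)) - 1.
Proof.
  rewrite <- (sumI_weights_const 1). unfold excess. rewrite <- sumI_minus.
  apply sumI_ext; intros i Hi. specialize (d_pos i Hi).
  destruct (d i) as [|k]; [lia|]. simpl pred. rewrite S_INR. ring.
Qed.

Lemma excess_sq_nonneg : 0 <= excess_sq.
Proof.
  apply sumI_nonneg; intros i Hi. pose proof (p_nonneg i Hi).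
  apply Rmult_le_pos; [lra|apply pow2_ge_0].
Qed.

Lemma rpgf_gap_near_one c : c < excess ->
  exists x0, 0 <= x0 < 1 /\ forall x, x0 <= x <= 1 -> c * (1 - x) <= 1 - rpgf x.
Proof.
  intros Hc. pose proof excess_sq_nonneg as HS.
  set (del := Rmin (1 / 2) ((excess - c) / (excess_sq + 1))).
  assert (Hdel : 0 < del) by (apply Rmin_glb_lt; [lra|apply Rdiv_lt_0_compat; lra]).
  assert (Hdel1 : del <= 1 / 2) by apply Rmin_l.
  assert (HdelS : del * excess_sq <= excess - c).
  { assert (Hr : del <= (excess - c) / (excess_sq + 1)) by apply Rmin_r.
    apply Rmult_le_compat_r with (r := excess_sq + 1) in Hr; [|lra].
    unfold Rdiv in Hr. rewrite Rmult_assoc, Rinv_l, Rmult_1_r in Hr by lra. nra. }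
  exists (1 - del). split; [lra|]. intros x Hx.
  pose proof (one_minus_rpgf_ge x ltac:(lra)).
  assert ((1 - x) * excess_sq <= excess - c) by nra. nra.
Qed.

Lemma rpgf_int_correct lam : 0 <= lam -> is_RInt rpgf 0 lam (rpgf_int lam).
Proof.
  intros Hl. unfold rpgf_int.
  rewrite (sumI_ext n _ (fun i => p i * (lam ^ d i / INR (d i)))) by (intros; unfold Rdiv; ring).
  apply is_RInt_sumI. intros i Hi. specialize (d_pos i Hi).
  destruct (d i) as [|k]; [lia|]. simpl pred.
  assert (Hk : INR k + 1 > 0) by (pose proof (pos_INR k); lra).
  replace (lam ^ S k / INR (S k)) with (lam ^ S k / (INR k + 1) - 0 ^ S k / (INR k + 1))
    by (rewrite pow_i by lia; rewrite S_INR; unfold Rdiv; ring).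
  apply (is_RInt_antiderivative (fun x => x ^ S k / (INR k + 1))); [exact Hl| |].
  - intros x _. auto_derive; [lra|].
    change (match k with 0%nat => 1 | S _ => INR k + 1 end) with (INR (S k)).
    rewrite S_INR. field. lra.
  - intros x _. auto_derive. exact I.
Qed.

Lemma rpgf_int_nonneg lam : 0 <= lam -> 0 <= rpgf_int lam.
Proof.
  intros Hl. apply sumI_nonneg; intros i Hi. pose proof (p_nonneg i Hi).
  assert (0 < INR (d i)) by (apply lt_0_INR; specialize (d_pos i Hi); lia).
  apply Rmult_le_pos; [apply Rdiv_le_0_compat; lra | now apply pow_le].
Qed.

Lemma idle_prob_bounds lam : 0 < lam < 1 ->
  1 - lam <= 1 - pgf lam <= (1 + excess) * (1 - lam).
Proof.
  intros Hl. rewrite <- rpgf_mul_id. destruct (rpgf_unit_interval lam ltac:(lra)).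
  pose proof (one_minus_rpgf_le lam ltac:(lra)). split; nra.
Qed.

Section WaitingKernel.

Variable lam : R.
Hypothesis lam_range : 0 < lam < 1.

(* The substitution [x = F w] turns [int_0^oo F(w)^(k+1) dw] into
   [int_0^lam power_kernel k]. *)
Definition power_kernel (k : nat) (x : R) : R := x ^ k / (1 - lam * rpgf x).
Definition power_potential (k : nat) (y : R) : R := RInt (power_kernel k) 0 y.
Definition wait_kernel (x : R) : R := rpgf x / (1 - lam * rpgf x).

(* The denominators stay away from 0, so the kernels are continuous on [[-1, 1]]
   and [power_potential k] is an antiderivative of [power_kernel k] on (-1, 1). *)
Lemma kernel_denominator_ge x : -1 <= x <= 1 -> 1 - lam <= 1 - lam * rpgf x.
Proof. intros Hx. destruct (rpgf_abs_le1 x Hx). nra. Qed.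

Lemma power_kernel_continuity k x : -1 <= x <= 1 -> continuity_pt (power_kernel k) x.
Proof.
  intros Hx. pose proof (kernel_denominator_ge x Hx).
  apply continuity_pt_div; [apply derivable_continuous_pt, derivable_pt_pow| |lra].
  apply continuity_pt_minus; [apply continuity_pt_const; intros a b; reflexivity|].
  apply continuity_pt_mult; [apply continuity_pt_const; intros a b; reflexivity|].
  apply rpgf_continuity.
Qed.

Lemma power_kernel_integrable k b : -1 <= b <= 1 -> ex_RInt (power_kernel k) 0 b.
Proof.
  intros Hb. apply (ex_RInt_continuous (V:=R_CompleteNormedModule)). intros z Hz.
  apply continuity_pt_filterlim, power_kernel_continuity.
  destruct (Rle_dec 0 b).
  - rewrite Rmin_left, Rmax_right in Hz by lra. lra.
  - rewrite Rmin_right, Rmax_left in Hz by lra. lra.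
Qed.

Lemma power_potential_derive k y : -1 < y < 1 ->
  is_derive (power_potential k) y (power_kernel k y).
Proof.
  intros Hy. apply is_derive_RInt with 0.
  - assert (He : 0 < Rmin (1 - y) (y + 1)) by (apply Rmin_glb_lt; lra).
    exists (mkposreal _ He). intros b Hb.
    apply (RInt_correct (V:=R_CompleteNormedModule)), power_kernel_integrable.
    change (Rabs (b - y) < Rmin (1 - y) (y + 1)) in Hb. apply Rabs_lt_between in Hb.
    pose proof (Rmin_l (1 - y) (y + 1)). pose proof (Rmin_r (1 - y) (y + 1)). lra.
  - apply continuity_pt_filterlim, power_kernel_continuity. lra.
Qed.

Section Trajectory.

Variable F : R -> R.
Hypothesis F_ode : forall w, 0 <= w -> is_derive F w (lam * pgf (F w) - F w).
Hypothesis F_init : F 0 = lam.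

Lemma F_growth_bounds t : 0 <= t -> (forall s, 0 <= s < t -> 0 < F s < 1) ->
  lam <= F t * exp t /\ F t * exp ((1 - lam) * t) <= lam.
Proof.
  intros Ht Hs. split.
  - replace lam with (F 0 * exp 0) by (rewrite exp_0, F_init; ring).
    apply (nondecreasing_from_derive (fun w => F w * exp w)
             (fun w => (lam * pgf (F w) - F w) * exp w + F w * exp w) t Ht).
    + intros x Hx.
      exact (is_derive_mult F exp x _ _ (F_ode x (proj1 Hx)) (is_derive_exp x) Rmult_comm).
    + intros x Hx. specialize (Hs x Hx). rewrite <- rpgf_mul_id.
      destruct (rpgf_unit_interval (F x) ltac:(lra)). pose proof (exp_pos x).
      assert (0 <= lam * (F x * rpgf (F x)) * exp x) by (repeat apply Rmult_le_pos; lra). nra.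
  - replace lam with (F 0 * exp ((1 - lam) * 0)) at 2 by (rewrite Rmult_0_r, exp_0, F_init; ring).
    apply (nonincreasing_from_derive (fun w => F w * exp ((1 - lam) * w))
             (fun w => (lam * pgf (F w) - F w) * exp ((1 - lam) * w)
                       + F w * ((1 - lam) * exp ((1 - lam) * w))) t Ht).
    + intros x Hx. refine (is_derive_mult F (fun w => exp ((1 - lam) * w)) x _ _
                             (F_ode x (proj1 Hx)) _ Rmult_comm).
      auto_derive; [exact I|ring].
    + intros x Hx. specialize (Hs x Hx). rewrite <- rpgf_mul_id.
      destruct (rpgf_unit_interval (F x) ltac:(lra)). pose proof (exp_pos ((1 - lam) * x)).
      assert (0 <= lam * F x * (1 - rpgf (F x)) * exp ((1 - lam) * x))
        by (repeat apply Rmult_le_pos; lra). nra.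
Qed.

Lemma F_positive_decay w : 0 <= w -> 0 < F w /\ F w * exp ((1 - lam) * w) <= lam.
Proof.
  (* continuous induction on [F w * (1 - F w) > 0], i.e. on [0 < F w < 1] *)
  assert (Hunit : forall w, 0 <= w -> F w * (1 - F w) > 0).
  { apply continuous_induction.
    - intros x Hx. apply continuity_pt_mult; [|apply continuity_pt_minus;
        [apply continuity_pt_const; intros a b; reflexivity|]];
        exact (is_derive_continuity_pt F x _ (F_ode x Hx)).
    - rewrite F_init. nra.
    - intros t Ht Hbelow.
      destruct (F_growth_bounds t Ht) as [Hlow Hup].
      { intros s Hs. apply unit_interval_of_prod_pos, Hbelow, Hs. }
      (* [lam <= F t e^t] gives [F t > 0], and [F t <= F t e^((1-lam) t) <= lam < 1] *)
      pose proof (exp_pos t).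
      assert (1 <= exp ((1 - lam) * t)) by (pose proof (exp_ineq1_le ((1 - lam) * t)); nra).
      assert (0 < F t) by (destruct (Rlt_dec 0 (F t)); [assumption|nra]).
      nra. }
  intros Hw. split; [exact (proj1 (unit_interval_of_prod_pos _ (Hunit w Hw)))|].
  apply (F_growth_bounds w Hw). intros s Hs. apply unit_interval_of_prod_pos, Hunit. lra.
Qed.

Lemma F_in_unit w : 0 <= w -> 0 < F w < 1.
Proof.
  intros Hw. destruct (F_positive_decay w Hw) as [Hpos Hdecay]. split; [exact Hpos|].
  assert (1 <= exp ((1 - lam) * w)) by (pose proof (exp_ineq1_le ((1 - lam) * w)); nra). nra.
Qed.

Lemma F_vanishes : filterlim F (Rbar_locally p_infty) (locally 0).
Proof.
  apply (proj2 (filterlim_R_iff _ _ _)). intros eps. pose proof (cond_pos eps) as He.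
  set (T0 := - ln eps / (1 - lam)).
  exists (Rmax 0 T0). intros T HT.
  pose proof (Rmax_l 0 T0). pose proof (Rmax_r 0 T0).
  destruct (F_positive_decay T ltac:(lra)) as [Hpos Hdecay].
  (* past [T0], the decay bound [lam * e^(-(1-lam) T) < eps] applies *)
  assert (Hx : - ln eps < (1 - lam) * T).
  { replace (- ln eps) with ((1 - lam) * T0) by (unfold T0; field; lra).
    apply Rmult_lt_compat_l; lra. }
  apply exp_increasing in Hx. rewrite exp_Ropp, exp_ln in Hx by exact He.
  rewrite Rminus_0_r, Rabs_pos_eq by lra.
  apply Rnot_le_lt. intros Hge.
  assert (eps * exp ((1 - lam) * T) > eps * / eps) by (apply Rmult_gt_compat_l; lra).
  assert (eps * exp ((1 - lam) * T) <= F T * exp ((1 - lam) * T))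
    by (apply Rmult_le_compat_r; [pose proof (exp_pos ((1 - lam) * T))|]; lra).
  rewrite Rinv_r in * by lra. lra.
Qed.

Lemma power_integral_finite k T : 0 <= T ->
  is_RInt (fun w => F w ^ S k) 0 T (power_potential k lam - power_potential k (F T)).
Proof.
  intros HT.
  replace (power_potential k lam - power_potential k (F T))
    with (minus (- power_potential k (F T)) (- power_potential k (F 0)))
    by (unfold minus, plus, opp; simpl; rewrite F_init; ring).
  apply (is_RInt_derive (fun w => - power_potential k (F w)) (fun w => F w ^ S k));
    rewrite Rmin_left, Rmax_right by lra; intros x Hx.
  - destruct (F_in_unit x (proj1 Hx)) as [Hf1 Hf2].
    pose proof (is_derive_opp _ x _ (is_derive_comp (power_potential k) F x _ _
      (power_potential_derive k (F x) ltac:(lra)) (F_ode x (proj1 Hx)))) as Hd.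
    replace (F x ^ S k) with
      (opp (scal (lam * pgf (F x) - F x) (power_kernel k (F x)))); [exact Hd|].
    unfold opp, scal; simpl. unfold mult; simpl. unfold power_kernel.
    rewrite <- rpgf_mul_id. pose proof (kernel_denominator_ge (F x) ltac:(lra)).
    simpl. field. lra.
  - apply continuity_pt_filterlim, (continuity_pt_comp F (fun y => y ^ S k)).
    + exact (is_derive_continuity_pt F x _ (F_ode x (proj1 Hx))).
    + apply derivable_continuous_pt, derivable_pt_pow.
Qed.

(* Letting [T -> oo]: [int_0^oo F^(k+1) = power_potential k lam], since [F T -> 0]. *)
Lemma power_integral k :
  RInt_gen (fun w => F w ^ S k) (at_point 0) (Rbar_locally p_infty) = power_potential k lam.
Proof.
  apply is_RInt_gen_unique.
  apply (is_RInt_gen_from_limit _ (fun T => power_potential k lam - power_potential k (F T)));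
    [exact (power_integral_finite k)|].
  assert (Hzero : power_potential k 0 = 0) by apply (RInt_point (V:=R_CompleteNormedModule)).
  assert (Hc : filterlim (power_potential k) (locally 0) (locally 0)).
  { rewrite <- Hzero at 2. apply continuity_pt_filterlim,
      (is_derive_continuity_pt _ _ _ (power_potential_derive k 0 ltac:(lra))). }
  pose proof (filterlim_comp _ _ _ F (power_potential k) _ _ _ F_vanishes Hc) as H.
  rewrite filterlim_R_iff in H |- *. intros eps.
  specialize (H eps). revert H. apply filter_imp.
  intros x Hx. replace (power_potential k lam - power_potential k (F x) - power_potential k lam)
    with (- (power_potential k (F x) - 0)) by ring.
  rewrite Rabs_Ropp. exact Hx.
  all: exact _.
Qed.

Lemma EW_wait_integral : is_RInt wait_kernel 0 lam (EW n p d F).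
Proof.
  unfold EW. rewrite (sumI_ext n _ (fun i => p i * power_potential (pred (d i)) lam)).
  2:{ intros i Hi. pose proof (d_pos i Hi).
      rewrite <- power_integral. now replace (S (pred (d i))) with (d i) by lia. }
  apply (is_RInt_ext (V:=R_NormedModule)
           (fun x => sumI n (fun i => p i * power_kernel (pred (d i)) x))).
  - intros x _. unfold wait_kernel, power_kernel.
    rewrite (sumI_ext n _ (fun i => / (1 - lam * rpgf x) * (p i * x ^ pred (d i))))
      by (intros; unfold Rdiv; ring).
    rewrite sumI_scal. unfold Rdiv. apply Rmult_comm.
  - apply is_RInt_sumI. intros i Hi.
    apply (RInt_correct (V:=R_CompleteNormedModule)), power_kernel_integrable. lra.
Qed.

End Trajectory.

Lemma wait_integral_bounds I : is_RInt wait_kernel 0 lam I ->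
  rpgf_int lam <= I <= rpgf_int lam / (1 - lam).
Proof.
  intros HI. pose proof (rpgf_int_correct lam ltac:(lra)) as HQ. split.
  - apply (is_RInt_le _ _ 0 lam _ _ ltac:(lra) HQ HI). intros x Hx. unfold wait_kernel.
    destruct (rpgf_unit_interval x ltac:(lra)). set (q := rpgf x) in *.
    assert (1 <= / (1 - lam * q)) by (rewrite <- Rinv_1; apply Rinv_le_contravar; nra).
    unfold Rdiv. nra.
  - replace (rpgf_int lam / (1 - lam)) with (/ (1 - lam) * rpgf_int lam) by (unfold Rdiv; ring).
    apply (is_RInt_le _ _ 0 lam _ _ ltac:(lra) HI
             (is_RInt_scal (V:=R_NormedModule) _ 0 lam (/ (1 - lam)) _ HQ)).
    intros x Hx. unfold wait_kernel. destruct (rpgf_unit_interval x ltac:(lra)).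
    set (q := rpgf x) in *.
    assert (/ (1 - lam * q) <= / (1 - lam)) by (apply Rinv_le_contravar; nra).
    unfold Rdiv. change (scal (/ (1 - lam)) q) with (/ (1 - lam) * q). nra.
Qed.

(* From above,
   [1 - lam * rpgf x <= (1 - lam) + excess (1 - x)]; from below,
   [1 - lam * rpgf x >= lam ((1 - lam) + (1 - rpgf x))], where [1 - rpgf x]
   is at least [c (1 - x)] on [[x0, 1]] and at least [1 - rpgf x0] below [x0]. *)
Lemma wait_kernel_lower x : 0 <= x <= 1 ->
  / ((1 - lam) + excess * (1 - x)) - 1 <= wait_kernel x.
Proof.
  intros Hx. unfold wait_kernel.
  destruct (rpgf_unit_interval x Hx). pose proof (one_minus_rpgf_le x Hx) as Hm.
  set (q := rpgf x) in *.
  assert (0 < 1 - lam * q) by nra.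
  assert (/ (1 - lam + excess * (1 - x)) <= / (1 - lam * q)) by (apply Rinv_le_contravar; nra).
  assert (/ (1 - lam * q) - 1 <= q / (1 - lam * q)).
  { apply Rmult_le_reg_r with (1 - lam * q); [lra|]. unfold Rdiv.
    rewrite Rmult_minus_distr_r, Rinv_l, Rmult_assoc, Rinv_l by lra. nra. }
  lra.
Qed.

Lemma wait_kernel_upper c x0 x : 0 < c ->
  (forall y, x0 <= y <= 1 -> c * (1 - y) <= 1 - rpgf y) -> 0 < 1 - rpgf x0 ->
  0 <= x <= 1 -> wait_kernel x <= / lam * (/ ((1 - lam) + c * (1 - x)) + / (1 - rpgf x0)).
Proof.
  intros Hc Hgap HD Hx. unfold wait_kernel.
  destruct (rpgf_unit_interval x Hx). set (q := rpgf x) in *. set (D := 1 - rpgf x0) in *.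
  assert (HDq : 0 < 1 - lam * q) by nra.
  assert (q / (1 - lam * q) <= / (1 - lam * q))
    by (unfold Rdiv; pose proof (Rinv_0_lt_compat _ HDq); nra).
  assert (Hb : 1 - lam * q >= lam * ((1 - lam) + (1 - q))) by nra.
  assert (0 < / D) by (apply Rinv_0_lt_compat; lra).
  assert (0 < / lam) by (apply Rinv_0_lt_compat; lra).
  assert (HE : 0 < (1 - lam) + c * (1 - x)) by nra.
  assert (0 < / (1 - lam + c * (1 - x))) by (apply Rinv_0_lt_compat; nra).
  destruct (Rle_dec x0 x) as [Hle|Hlt].
  - specialize (Hgap x (conj Hle (proj2 Hx))). fold q in Hgap.
    assert (Hinv : / (1 - lam * q) <= / (lam * ((1 - lam) + c * (1 - x))))
      by (apply Rinv_le_contravar; nra).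
    rewrite Rinv_mult in Hinv. nra.
  - assert (q <= rpgf x0) by (apply rpgf_mono; lra).
    assert (Hinv : / (1 - lam * q) <= / (lam * D))
      by (apply Rinv_le_contravar; unfold D in *; nra).
    rewrite Rinv_mult in Hinv. nra.
Qed.

Lemma wait_integral_lower I : 0 < excess -> is_RInt wait_kernel 0 lam I ->
  - ln (1 - lam) / excess - ((ln (1 + excess) - ln excess) / excess + 1) <= I.
Proof.
  intros Hm HI. set (m := excess) in *.
  set (A := fun x => - ln ((1 - lam) + m * (1 - x)) / m - x).
  assert (HA : is_RInt (fun x => / ((1 - lam) + m * (1 - x)) - 1) 0 lam (A lam - A 0)).
  { apply is_RInt_antiderivative; [lra| |]; intros x Hx; unfold A; auto_derive; try nra.
    field. split; [|lra]. nra. }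
  apply Rle_trans with (A lam - A 0).
  - unfold A. replace ((1 - lam) + m * (1 - lam)) with ((1 - lam) * (1 + m)) by ring.
    rewrite ln_mult by lra. replace (1 - lam + m * (1 - 0)) with (1 - lam + m) by ring.
    assert (ln m <= ln (1 - lam + m)) by (apply ln_le; lra).
    unfold Rdiv. pose proof (Rinv_0_lt_compat m Hm). nra.
  - apply (is_RInt_le _ _ 0 lam _ _ ltac:(lra) HA HI). intros x Hx.
    apply wait_kernel_lower. lra.
Qed.

Lemma wait_integral_upper I c x0 : 0 < c ->
  (forall x, x0 <= x <= 1 -> c * (1 - x) <= 1 - rpgf x) -> 0 < 1 - rpgf x0 ->
  is_RInt wait_kernel 0 lam I ->
  I <= - ln (1 - lam) / (lam * c) + / (1 - rpgf x0).
Proof.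
  intros Hc Hgap HD HI. set (D := 1 - rpgf x0) in *.
  set (A := fun x => / lam * (- ln ((1 - lam) + c * (1 - x)) / c + x / D)).
  assert (HA : is_RInt (fun x => / lam * (/ ((1 - lam) + c * (1 - x)) + / D)) 0 lam
                 (A lam - A 0)).
  { apply is_RInt_antiderivative; [lra| |]; intros x Hx; unfold A; auto_derive; try nra.
    field. split; [lra|]. split; [nra|]. lra. }
  apply Rle_trans with (A lam - A 0).
  - apply (is_RInt_le _ _ 0 lam _ _ ltac:(lra) HI HA). intros x Hx.
    apply (wait_kernel_upper c x0 x Hc Hgap HD). lra.
  - unfold A. replace ((1 - lam) + c * (1 - lam)) with ((1 - lam) * (1 + c)) by ring.
    rewrite ln_mult by lra. replace (1 - lam + c * (1 - 0)) with (1 - lam + c) by ring.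
    assert (ln (1 - lam + c) <= ln (1 + c)) by (apply ln_le; lra).
    assert (0 < / lam * / c) by (apply Rmult_lt_0_compat; apply Rinv_0_lt_compat; lra).
    replace (/ lam * (- (ln (1 - lam) + ln (1 + c)) / c + lam / D)
             - / lam * (- ln (1 - lam + c) / c + 0 / D))
      with (- ln (1 - lam) / (lam * c) + / D + / lam * / c * (ln (1 - lam + c) - ln (1 + c)))
      by (field; lra).
    nra.
Qed.

End WaitingKernel.

Lemma log_idle_bounds lam : 0 < lam < 1 ->
  - ln (1 - lam) - ln (1 + excess) <= - ln (1 - pgf lam) <= - ln (1 - lam).
Proof.
  intros Hl. destruct (idle_prob_bounds lam Hl) as [Hlow Hup].
  assert (0 < 1 + excess) by nra.
  assert (ln (1 - pgf lam) <= ln ((1 + excess) * (1 - lam))) by (apply ln_le; lra).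
  assert (ln (1 - lam) <= ln (1 - pgf lam)) by (apply ln_le; lra).
  rewrite ln_mult in * by lra. lra.
Qed.

Section Limits.

Variable F : R -> R -> R.
Hypothesis F_ode : forall lam, 0 < lam < 1 -> forall w, 0 <= w ->
  is_derive (F lam) w (lam * pgf (F lam w) - F lam w).
Hypothesis F_init : forall lam, 0 < lam < 1 -> F lam 0 = lam.

Let ratio (lam : R) : R := - EW n p d (F lam) / ln (plam n p d lam).

Lemma EW_wait_integral_at lam : 0 < lam < 1 ->
  is_RInt (wait_kernel lam) 0 lam (EW n p d (F lam)).
Proof. intros Hl. exact (EW_wait_integral lam Hl (F lam) (F_ode lam Hl) (F_init lam Hl)). Qed.

Section HeavyTraffic.

Hypothesis excess_pos : 0 < excess.

Lemma heavy_traffic_lower eps : 0 < eps -> at_left 1 (fun lam => / excess - eps < ratio lam).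
Proof.
  intros He. set (m := excess) in *.
  set (K := (ln (1 + m) - ln m) / m + 1).
  assert (HK : 0 < K).
  { assert (ln m < ln (1 + m)) by (apply ln_increasing; lra).
    unfold K. assert (0 < (ln (1 + m) - ln m) / m) by (apply Rdiv_lt_0_compat; lra). lra. }
  apply (at_left_one_large_log (ln (1 + m) + K / eps)). intros lam Hl HL.
  assert (Hl' : 0 < lam < 1) by lra.
  set (L := - ln (1 - lam)) in *.
  pose proof (wait_integral_lower lam Hl' _ excess_pos (EW_wait_integral_at lam Hl')) as Hlow.
  fold m L K in Hlow.
  destruct (log_idle_bounds lam Hl') as [HP1 HP2]. fold m L in HP1, HP2.
  unfold ratio, plam. change (sumI n (fun i => p i * lam ^ d i)) with (pgf lam).
  set (P := - ln (1 - pgf lam)) in *. set (I := EW n p d (F lam)) in *.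
  assert (HKL : K < eps * (L - ln (1 + m))).
  { apply Rmult_lt_compat_l with (r := eps) in HL; [|exact He].
    unfold Rdiv in HL. rewrite Rmult_plus_distr_l, <- Rmult_assoc, (Rmult_comm eps K),
      Rmult_assoc, Rinv_r, Rmult_1_r in HL by lra. lra. }
  assert (HP : 0 < P).
  { assert (0 < ln (1 + m)) by (rewrite <- ln_1; apply ln_increasing; lra).
    assert (0 < eps * (L - ln (1 + m))) by lra. nra. }
  assert (Hln : ln (1 - pgf lam) <> 0) by (unfold P in HP; lra).
  replace (- I / ln (1 - pgf lam)) with (I / P) by (unfold P; field; exact Hln).
  apply lt_div_of_mul_lt; [exact HP|].
  (* [(1/m - eps) P <= L/m - eps (L - ln(1+m)) < L/m - K <= I] *)
  assert (P / m <= L / m) by (apply Rmult_le_compat_r; [left; apply Rinv_0_lt_compat|]; lra).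
  assert (eps * (L - ln (1 + m)) <= eps * P) by (apply Rmult_le_compat_l; lra).
  unfold Rdiv in *. nra.
Qed.

(* For [lam > 1/2] the factor [1 / lam] in [wait_integral_upper] costs at most
   a constant, because [(1 - lam) * (-ln (1 - lam)) <= 1]. *)
Lemma EW_heavy_upper lam c x0 : 1 / 2 < lam < 1 -> 0 < c ->
  (forall x, x0 <= x <= 1 -> c * (1 - x) <= 1 - rpgf x) -> 0 < 1 - rpgf x0 ->
  EW n p d (F lam) <= - ln (1 - lam) / c + (2 / c + / (1 - rpgf x0)).
Proof.
  intros Hl Hc Hgap HD. assert (Hl' : 0 < lam < 1) by lra.
  pose proof (wait_integral_upper lam Hl' _ c x0 Hc Hgap HD (EW_wait_integral_at lam Hl')) as Hup.
  set (L := - ln (1 - lam)) in *.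
  assert (HxL : (1 - lam) * L <= 1)
    by (pose proof (neg_xlnx_le_one (1 - lam) ltac:(lra)); unfold L; lra).
  replace (L / (lam * c)) with (L / c + (1 - lam) * L / (lam * c)) in Hup by (field; lra).
  assert ((1 - lam) * L / (lam * c) <= 2 / c).
  { apply div_le_div_cross; [nra|lra|].
    apply Rle_trans with c; [|nra]. rewrite <- (Rmult_1_l c) at 2.
    apply Rmult_le_compat_r; lra. }
  lra.
Qed.

Lemma heavy_traffic_upper eps : 0 < eps -> at_left 1 (fun lam => ratio lam < / excess + eps).
Proof.
  intros He. set (m := excess) in *. pose proof (Rinv_0_lt_compat m excess_pos) as Him.
  (* compare [1 - rpgf] with a slope [c < m] such that [1/c = 1/m + eps/2] *)
  set (c := m / (1 + m * eps / 2)).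
  assert (Hme : 0 < m * eps) by (apply Rmult_lt_0_compat; lra).
  assert (Hc : 0 < c) by (unfold c; apply Rdiv_lt_0_compat; lra).
  assert (Hcm : c < m) by (assert (c * (1 + m * eps / 2) = m) by (unfold c; field; lra); nra).
  assert (Hic : / c = / m + eps / 2) by (unfold c; field; lra).
  destruct (rpgf_gap_near_one c Hcm) as [x0 [Hx0 Hgap]].
  assert (HD : 0 < 1 - rpgf x0) by (pose proof (Hgap x0 ltac:(lra)); nra).
  set (B := 2 / c + / (1 - rpgf x0)).
  assert (HB : 0 < B).
  { pose proof (Rinv_0_lt_compat _ HD). assert (0 < 2 / c) by (apply Rdiv_lt_0_compat; lra).
    unfold B. lra. }
  set (l1 := ln (1 + m)).
  assert (Hl1 : 0 < l1) by (unfold l1; rewrite <- ln_1; apply ln_increasing; lra).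
  apply (at_left_one_large_log (l1 + 2 * (B + (/ m + eps) * l1) / eps)). intros lam Hl HL.
  pose proof (EW_heavy_upper lam c x0 Hl Hc Hgap HD) as HIL. fold B in HIL.
  destruct (log_idle_bounds lam ltac:(lra)) as [HP1 HP2]. fold m l1 in HP1, HP2.
  unfold ratio, plam. change (sumI n (fun i => p i * lam ^ d i)) with (pgf lam).
  set (L := - ln (1 - lam)) in *. set (P := - ln (1 - pgf lam)) in *.
  set (I := EW n p d (F lam)) in *.
  assert (HLl : eps * (L - l1) > 2 * (B + (/ m + eps) * l1)).
  { apply Rmult_lt_compat_l with (r := eps) in HL; [|exact He].
    replace (eps * (l1 + 2 * (B + (/ m + eps) * l1) / eps))
      with (eps * l1 + 2 * (B + (/ m + eps) * l1)) in HL by (field; lra). lra. }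
  assert (HP : 0 < P) by (assert (0 < (/ m + eps) * l1) by (apply Rmult_lt_0_compat; lra); nra).
  assert (Hln : ln (1 - pgf lam) <> 0) by (unfold P in HP; lra).
  replace (- I / ln (1 - pgf lam)) with (I / P) by (unfold P; field; exact Hln).
  apply div_lt_of_lt_mul; [exact HP|].
  (* [I <= (1/m + eps/2) L + B < (1/m + eps) (L - l1) <= (1/m + eps) P] *)
  assert ((/ m + eps) * (L - l1) <= (/ m + eps) * P) by (apply Rmult_le_compat_l; lra).
  unfold Rdiv in HIL. rewrite Hic in HIL. nra.
Qed.

Lemma heavy_traffic_limit : filterlim ratio (at_left 1) (locally (/ excess)).
Proof.
  apply (proj2 (filterlim_R_iff _ _ _)). intros eps. pose proof (cond_pos eps) as He.
  generalize (filter_and _ _ (heavy_traffic_lower eps He) (heavy_traffic_upper eps He)).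
  apply filter_imp. intros lam [Hlow Hup]. apply Rabs_lt_between. lra.
Qed.

End HeavyTraffic.

Section LightTraffic.

Variable j : nat.
Hypothesis d_incr : forall i k, (i < k)%nat -> (k < n)%nat -> (d i < d k)%nat.
Hypothesis j_lt_n : (j < n)%nat.
Hypothesis p_j_pos : p j > 0.
Hypothesis p_below_j : forall i, (i < j)%nat -> p i = 0.

(* As [lam -> 0], [pgf lam ~ p_j lam^(d_j)] and [rpgf_int lam ~ (p_j / d_j) lam^(d_j)]. *)
Let pgf_low : R -> R := lowest_part n d j p.
Let rpgf_int_low : R -> R := lowest_part n d j (fun i => p i / INR (d i)).
Let light_lower (lam : R) : R := rpgf_int_low lam * (1 - pgf lam) / pgf_low lam.
Let light_upper (lam : R) : R := rpgf_int_low lam / ((1 - lam) * pgf_low lam).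

Lemma light_traffic_sandwich lam : 0 < lam < 1 ->
  light_lower lam <= ratio lam <= light_upper lam.
Proof.
  intros Hl.
  assert (Hg : pgf lam = lam ^ d j * pgf_low lam)
    by exact (sumI_factor_lowest_power n d j d_incr j_lt_n p lam p_below_j).
  assert (HQ : rpgf_int lam = lam ^ d j * rpgf_int_low lam).
  { apply (sumI_factor_lowest_power n d j d_incr j_lt_n (fun i => p i / INR (d i)) lam).
    intros i Hi. rewrite p_below_j by exact Hi. unfold Rdiv. ring. }
  assert (Hlow : p j <= pgf_low lam) by (apply (lowest_part_ge n d j j_lt_n p lam p_nonneg); lra).
  assert (HX : 0 < lam ^ d j) by (apply pow_lt; lra).
  pose proof (EW_wait_integral_at lam Hl) as HI.
  destruct (wait_integral_bounds lam Hl _ HI) as [HI1 HI2].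
  pose proof (rpgf_int_nonneg lam ltac:(lra)) as HQ0.
  destruct (idle_prob_bounds lam Hl) as [Hg1 _].
  unfold ratio, plam, light_lower, light_upper.
  change (sumI n (fun i => p i * lam ^ d i)) with (pgf lam).
  set (g := pgf lam) in *. set (Q := rpgf_int lam) in *. set (I := EW n p d (F lam)) in *.
  assert (Hgpos : 0 < g) by (rewrite Hg; apply Rmult_lt_0_compat; lra).
  destruct (neg_ln_one_minus_bounds g ltac:(lra)) as [HP1 HP2].
  set (P := - ln (1 - g)) in *.
  assert (Hln : ln (1 - g) <> 0) by (unfold P in HP1; lra).
  replace (- I / ln (1 - g)) with (I / P) by (unfold P; field; exact Hln).
  (* the common factor [lam^(d_j)] cancels in both bounds *)
  replace (rpgf_int_low lam * (1 - g) / pgf_low lam) with (Q * (1 - g) / g)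
    by (rewrite HQ, Hg; field; lra).
  replace (rpgf_int_low lam / ((1 - lam) * pgf_low lam)) with (Q / ((1 - lam) * g))
    by (rewrite HQ, Hg; field; lra).
  assert (HPg : (1 - g) * P <= g).
  { apply Rmult_le_compat_l with (r := 1 - g) in HP2; [|lra].
    replace ((1 - g) * (g / (1 - g))) with g in HP2 by (field; lra). exact HP2. }
  assert (HIl : I * (1 - lam) <= Q).
  { apply Rmult_le_compat_r with (r := 1 - lam) in HI2; [|lra].
    replace (Q / (1 - lam) * (1 - lam)) with Q in HI2 by (field; lra). exact HI2. }
  split; apply div_le_div_cross; try nra.
Qed.

Lemma light_traffic_bound_limit (f : R -> R) :
  continuity_pt f 0 -> f 0 = 1 / INR (d j) ->
  filterlim f (at_right 0) (Rbar_locally (1 / INR (d j))).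
Proof. intros Hc H0. rewrite <- H0. exact (continuity_pt_at_right f 0 Hc). Qed.

Lemma light_traffic_limit : filterlim ratio (at_right 0) (locally (1 / INR (d j))).
Proof.
  assert (Hdj : 0 < INR (d j)) by (apply lt_0_INR; specialize (d_pos j j_lt_n); lia).
  assert (Hg0 : pgf_low 0 = p j) by (apply lowest_part_at_0; assumption).
  assert (HQ0 : rpgf_int_low 0 = p j / INR (d j)).
  { apply (lowest_part_at_0 n d j d_incr j_lt_n (fun i => p i / INR (d i))).
    intros i Hi. rewrite p_below_j by exact Hi. unfold Rdiv. ring. }
  assert (Hcg : continuity_pt pgf_low 0) by apply lowest_part_continuity.
  assert (HcQ : continuity_pt rpgf_int_low 0) by apply lowest_part_continuity.
  assert (Hconst : continuity_pt (fun _ => 1) 0)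
    by (apply continuity_pt_const; intros a b; reflexivity).
  assert (Hcp : continuity_pt (fun x => 1 - pgf x) 0)
    by (apply continuity_pt_minus; [exact Hconst | apply polynomial_continuity]).
  assert (Hcid : continuity_pt (fun x => 1 - x) 0)
    by (apply continuity_pt_minus; [exact Hconst | apply continuity_pt_id]).
  apply (filterlim_le_le (F := at_right 0) light_lower ratio light_upper (1 / INR (d j))).
  - apply (at_right_intro 0 _ 1); [lra|]. intros lam Hl. apply light_traffic_sandwich. lra.
  - apply light_traffic_bound_limit.
    + apply continuity_pt_div; [apply continuity_pt_mult; assumption | assumption | lra].
    + unfold light_lower. rewrite pgf_at_0, Hg0, HQ0. field. lra.
  - apply light_traffic_bound_limit.
    + apply continuity_pt_div; [assumption | apply continuity_pt_mult; assumption |].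
      rewrite Hg0. lra.
    + unfold light_upper. rewrite Hg0, HQ0. field. lra.
Qed.

End LightTraffic.

End Limits.

End ChoiceDistribution.

Theorem proposition5p3
  (n : nat) (p : nat -> R) (d : nat -> nat) (j : nat)
  (F : R -> R -> R)
  (hp_nonneg : forall i, (i < n)%nat -> 0 <= p i)
  (hp_sum : sumI n p = 1)
  (hd1 : forall i, (i < n)%nat -> (1 <= d i)%nat)
  (hd_incr : forall i k, (i < k)%nat -> (k < n)%nat -> (d i < d k)%nat)
  (hmean : sumI n (fun i => p i * INR (d i)) > 1)
  (hj : (j < n)%nat) (hpj : p j > 0)
  (hjmin : forall i, (i < j)%nat -> p i = 0)
  (hF_ode : forall lam, 0 < lam < 1 -> forall w, 0 <= w ->
      is_derive (F lam) w
        (lam * sumI n (fun i => p i * F lam w ^ d i) - F lam w))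
  (hF_init : forall lam, 0 < lam < 1 -> F lam 0 = lam) :
  filterlim (fun lam => - EW n p d (F lam) / ln (plam n p d lam))
            (at_right 0) (locally (1 / INR (d j)))
  /\
  filterlim (fun lam => - EW n p d (F lam) / ln (plam n p d lam))
            (at_left 1)
            (locally (1 / (sumI n (fun i => p i * INR (d i)) - 1))).
Proof.
  split.
  - exact (light_traffic_limit n p d hp_nonneg hp_sum hd1 F hF_ode hF_init
             j hd_incr hj hpj hjmin).
  -
    rewrite <- (excess_eq n p d hp_sum hd1), Rdiv_1_l.
    apply (heavy_traffic_limit n p d hp_nonneg hp_sum hd1 F hF_ode hF_init).
    rewrite (excess_eq n p d hp_sum hd1). lra.
Qed.
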